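(* Let $0<\alpha\le 5\pi/6$ and let $u,v\in V$ with $\{u,v\}\in E$ (i.e. $d(u,v)\le R$). Then either $\{u,v\}\in E_\alpha$, or there exist $u',v'\in V$ such that (a) $d(u',v')<d(u,v)$, (b) $u'=u$ or $\{u,u'\}\in E_\alpha$, and (c) $v'=v$ or $\{v,v'\}\in E_\alpha$.
   Context: Let $V$ be a finite set of pairwise distinct points (nodes) in the Euclidean plane, $d$ the Euclidean distance, and $R>0$. Let $G_R=(V,E)$ be the undirected graph with $E=\{\{u,v\}: u\neq v,\ d(u,v)\le R\}$. Fix a finite increasing sequence of radius levels $0<r_1<r_2<\dots<r_k=R$. For $u\in V$ and $1\le i\le k$ let $S_i(u)=\{v\in V\setminus\{u\}: d(u,v)\le r_i\}$. For $0<\alpha<2\pi$, a closed cone of width $\alpha$ with apex $u$ is a set $\{u+t(\cos\varphi,\sin\varphi): t\ge 0,\ \varphi\in[\theta-\alpha/2,\theta+\alpha/2]\}$ for some $\theta$. A finite set $S\subseteq V\setminus\{u\}$ has an $\alpha$-gap (at $u$) if some closed cone of width $\alpha$ with apex $u$ contains no node of $S$ (in particular $\emptyset$ has an $\alpha$-gap). The algorithm CBTC($\alpha$) assigns to each $u$ the index $i_u$ = the least $i\in\{1,\dots,k\}$ such that $S_i(u)$ has no $\alpha$-gap, or $i_u=k$ if there is no such $i$; set $N_\alpha(u)=S_{i_u}(u)$ and $N_\alpha=\{(u,v): v\in N_\alpha(u)\}$. Let $E_\alpha=\{\{u,v\}: (u,v)\in N_\alpha \text{ or } (v,u)\in N_\alpha\}$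 (the symmetric closure of $N_\alpha$) and $G_\alpha=(V,E_\alpha)$. *)

From Stdlib Require Import Reals List.
Open Scope R_scope.

Definition point : Type := (R * R)%type.

Definition d (p q : point) : R :=
  sqrt ((fst p - fst q) ^ 2 + (snd p - snd q) ^ 2).

(* Radius levels r_1 < ... < r_k = Rmax are given as a list rs of length k;
   r_i (1-based in the paper) is  nth (i-1) rs 0. Here indices are 0-based:
   level i (0 <= i < k) stands for r_{i+1}. *)
Definition levels_ok (rs : list R) (Rmax : R) : Prop :=
  (0 < length rs)%nat /\
  0 < nth 0 rs 0 /\
  (forall i : nat, (S i < length rs)%nat -> nth i rs 0 < nth (S i) rs 0) /\
  nth (pred (length rs)) rs 0 = Rmax.

Definition S_lvl (V : list point) (rs : list R) (i : nat) (u v : point) : Prop :=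
  In v V /\ v <> u /\ d u v <= nth i rs 0.

Definition in_cone (u : point) (theta alpha : R) (w : point) : Prop :=
  exists t phi : R, 0 <= t /\ theta - alpha / 2 <= phi <= theta + alpha / 2 /\
    w = (fst u + t * cos phi, snd u + t * sin phi).

Definition has_gap (Sset : point -> Prop) (u : point) (alpha : R) : Prop :=
  exists theta : R, forall w, Sset w -> ~ in_cone u theta alpha w.

Definition cbtc_index (V : list point) (rs : list R) (alpha : R) (u : point)
  (i : nat) : Prop :=
  (i < length rs)%nat /\
  ((~ has_gap (S_lvl V rs i u) u alpha /\
    forall j : nat, (j < i)%nat -> has_gap (S_lvl V rs j u) u alpha)
   \/
   (i = pred (length rs) /\
    forall j : nat, (j < length rs)%nat -> has_gap (S_lvl V rs j u) u alpha)).

Definition N_alpha (V : list point) (rs : list R) (alpha : R) (u v : point) : Prop :=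
  exists i : nat, cbtc_index V rs alpha u i /\ S_lvl V rs i u v.

Definition E_alpha (V : list point) (rs : list R) (alpha : R) (u v : point) : Prop :=
  N_alpha V rs alpha u v \/ N_alpha V rs alpha v u.

Definition E_R (V : list point) (Rmax : R) (u v : point) : Prop :=
  In u V /\ In v V /\ u <> v /\ d u v <= Rmax.

(* If {u,v} is not an edge of G_alpha, each endpoint stops at a level below
   d(u,v) at which its neighbourhood has no alpha-gap.  Looking from u towards
   v, the absence of a gap gives neighbours w1, w2 of u on opposite sides of
   the line uv whose angles with uv add up to at most alpha; likewise z1, z2 at
   v.  One of the two same-side pairs (w1, z2), (w2, z1) then has angle sum at
   most alpha <= 5 pi / 6, and for such a pair (w, z), with |uw|, |vz| < |uv|,
   the law of cosines and a concavity argument show that one of |wv|, |uz|,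
   |wz| is shorter than |uv|. *)

From Stdlib Require Import Reals List Lra Lia Psatz Classical Wf_nat.
Open Scope R_scope.

Definition dist2 (p q : point) : R := (fst p - fst q) ^ 2 + (snd p - snd q) ^ 2.

(* [angle p x y] is the angle at [p] between [x] and [y], in [[0, PI]]; the
   sign of [orient p x y] tells on which side of the line [p x] lies [y]. *)
Definition dot (p x y : point) : R :=
  (fst x - fst p) * (fst y - fst p) + (snd x - snd p) * (snd y - snd p).

Definition orient (p x y : point) : R :=
  (fst x - fst p) * (snd y - snd p) - (snd x - snd p) * (fst y - fst p).

Definition cos_angle (p x y : point) : R := dot p x y / (d p x * d p y).

Definition angle (p x y : point) : R := acos (cos_angle p x y).

Lemma dist2_pos (p q : point) : p <> q -> 0 < dist2 p q.
Proof.
  destruct p as [p1 p2], q as [q1 q2]; unfold dist2; simpl; intros Hne.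
  apply Rnot_le_lt; intros Hle; apply Hne.
  pose proof (pow2_ge_0 (p1 - q1)); pose proof (pow2_ge_0 (p2 - q2)).
  f_equal; apply Rle_antisym; nra.
Qed.

Lemma dist2_nonneg (p q : point) : 0 <= dist2 p q.
Proof. apply Rplus_le_le_0_compat; apply pow2_ge_0. Qed.

Lemma d_mul_self (p q : point) : d p q * d p q = dist2 p q.
Proof. apply sqrt_sqrt, dist2_nonneg. Qed.

Lemma d_sym (p q : point) : d p q = d q p.
Proof. unfold d; f_equal; ring. Qed.

Lemma d_nonneg (p q : point) : 0 <= d p q.
Proof. apply sqrt_pos. Qed.

Lemma d_self (p : point) : d p p = 0.
Proof. unfold d; rewrite !Rminus_diag; simpl; rewrite Rmult_0_l, Rplus_0_r; apply sqrt_0. Qed.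

Lemma d_pos (p q : point) : p <> q -> 0 < d p q.
Proof. intro H; apply sqrt_lt_R0, dist2_pos, H. Qed.

Lemma d_lt_of_dist2_lt (p q p' q' : point) : dist2 p q < dist2 p' q' -> d p q < d p' q'.
Proof. intro H; apply sqrt_lt_1_alt; split; [apply dist2_nonneg | exact H]. Qed.

Lemma dot_orient_sq (p x y : point) :
  dot p x y ^ 2 + orient p x y ^ 2 = dist2 p x * dist2 p y.
Proof. unfold dot, orient, dist2; ring. Qed.

Lemma orient_swap (u v z : point) : orient v u z = - orient u v z.
Proof. unfold orient; ring. Qed.

Lemma dist2_quadrilateral (u v w z : point) :
  dist2 u v * dist2 w z =
  dist2 u v * (dist2 u v + dist2 u w + dist2 v z - 2 * dot u v w - 2 * dot v u z)
  + 2 * dot u v w * dot v u z - 2 * orient u v w * orient u v z.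
Proof. unfold dist2, dot, orient; ring. Qed.

Section AngleAtPoint.

Variables p x y : point.
Hypotheses (x_not_p : x <> p) (y_not_p : y <> p).

Let dx_pos : 0 < d p x.
Proof. apply d_pos; auto. Qed.

Let dy_pos : 0 < d p y.
Proof. apply d_pos; auto. Qed.

Let norm_pos : 0 < d p x * d p y.
Proof. apply Rmult_lt_0_compat; auto. Qed.

Let dot_orient_norm : dot p x y ^ 2 + orient p x y ^ 2 = (d p x * d p y) ^ 2.
Proof. rewrite dot_orient_sq, <- !d_mul_self; ring. Qed.

Lemma cos_angle_bound : -1 <= cos_angle p x y <= 1.
Proof.
  pose proof norm_pos as HN; pose proof dot_orient_norm as E.
  pose proof (pow2_ge_0 (orient p x y)).
  assert (-(d p x * d p y) <= dot p x y <= d p x * d p y) by (split; nra).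
  unfold cos_angle; split; apply (Rmult_le_reg_r (d p x * d p y)); try exact HN;
    unfold Rdiv; rewrite Rmult_assoc, Rinv_l by lra; lra.
Qed.

Lemma cos_angle_acos : cos (angle p x y) = cos_angle p x y.
Proof. apply cos_acos, cos_angle_bound. Qed.

Lemma cos_angle_mul : cos (angle p x y) * (d p x * d p y) = dot p x y.
Proof.
  rewrite cos_angle_acos; unfold cos_angle; field; split; lra.
Qed.

Lemma sin_angle_mul : sin (angle p x y) * (d p x * d p y) = Rabs (orient p x y).
Proof.
  pose proof norm_pos as HN; pose proof dot_orient_norm as E.
  unfold angle; rewrite sin_acos by apply cos_angle_bound.
  assert (Hs : 1 - (cos_angle p x y)² = (Rabs (orient p x y) / (d p x * d p y))²).
  { unfold cos_angle, Rsqr.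
    replace (Rabs (orient p x y) / (d p x * d p y) * (Rabs (orient p x y) / (d p x * d p y)))
      with (orient p x y ^ 2 / (d p x * d p y) ^ 2)
      by (rewrite <- (pow2_abs (orient p x y)); field; lra).
    field_simplify_eq; [lra | lra]. }
  rewrite Hs, sqrt_Rsqr.
  - field; lra.
  - apply Rmult_le_pos; [apply Rabs_pos | left; apply Rinv_0_lt_compat; exact HN].
Qed.

End AngleAtPoint.

Lemma law_of_cosines (p x y : point) : x <> p -> y <> p ->
  dist2 x y = d p x ^ 2 + d p y ^ 2 - 2 * (d p x * d p y) * cos (angle p x y).
Proof.
  intros Hx Hy.
  replace (2 * (d p x * d p y) * cos (angle p x y))
    with (2 * (cos (angle p x y) * (d p x * d p y))) by ring.
  rewrite cos_angle_mul by auto.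
  rewrite <- !Rsqr_pow2, !Rsqr_def, !d_mul_self; unfold dist2, dot; ring.
Qed.

Lemma quadrilateral_cosines (u v w z : point) :
  v <> u -> w <> u -> z <> v -> 0 <= orient u v w * orient u v z ->
  dist2 w z = d u v ^ 2 + d u w ^ 2 + d v z ^ 2
    - 2 * d u v * (d u w * cos (angle u v w) + d v z * cos (angle v u z))
    + 2 * d u w * d v z * cos (angle u v w + angle v u z).
Proof.
  intros Hv Hw Hz Hside.
  assert (Hu : u <> v) by (intro e; apply Hv; auto).
  assert (C1 := cos_angle_mul u v w Hv Hw).
  assert (C2 := cos_angle_mul v u z Hu Hz).
  assert (S1 := sin_angle_mul u v w Hv Hw).
  assert (S2 := sin_angle_mul v u z Hu Hz).
  rewrite (d_sym v u) in C2, S2.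
  assert (S12 : sin (angle u v w) * (d u v * d u w) * (sin (angle v u z) * (d u v * d v z))
                = orient u v w * orient u v z).
  { rewrite S1, S2, (orient_swap u v z), Rabs_Ropp, <- Rabs_mult.
    apply Rabs_pos_eq; exact Hside. }
  apply (Rmult_eq_reg_l (dist2 u v)); [| apply Rgt_not_eq, dist2_pos; exact Hu].
  rewrite dist2_quadrilateral, <- C1, <- C2, (Rmult_assoc 2 (orient u v w)), <- S12.
  rewrite cos_plus, <- !d_mul_self.
  ring.
Qed.

Lemma quadratic_above_chord (f : R -> R) (L M : R) :
  (forall s, f s = - s * s + L * s + M) ->
  forall p q t, p <= t <= q -> (q - t) * f p + (t - p) * f q <= (q - p) * f t.
Proof.
  intros Hf p q t [Hpt Htq]; rewrite !Hf.
  assert (0 <= (q - p) * (t - p) * (q - t)) by (repeat apply Rmult_le_pos; lra).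
  replace ((q - p) * (- t * t + L * t + M))
    with ((q - t) * (- p * p + L * p + M) + (t - p) * (- q * q + L * q + M)
          + (q - p) * (t - p) * (q - t)) by ring.
  lra.
Qed.

(* The difference of the two sides is concave in each radius, so it suffices to
   check the endpoints [2 c a], [c] and [2 c b], [c] of the admissible ranges. *)
Lemma crossing_quadratic_ineq (c r1 r2 a b K : R) :
  0 < r1 < c -> 0 < r2 < c -> 2 * c * a <= r1 -> 2 * c * b <= r2 ->
  0 <= 2 * a - 1 - 4 * b * K -> 0 <= 2 * b - 1 - 4 * a * K -> 0 <= a + b - 1 - K ->
  r1 * r1 + r2 * r2 + 2 * r1 * r2 * K < 2 * c * (r1 * a + r2 * b).
Proof.
  intros Hr1 Hr2 Ha Hb H1 H2 H3.
  assert (Hc : 0 < c) by lra.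
  set (f s := - s * s + (2 * c * b - 2 * c * K) * s + c * c * (2 * a - 1)).
  assert (Hf : 0 <= f r2).
  { assert (Hfp : 0 <= f (2 * c * b)).
    { replace (f (2 * c * b)) with (c * c * (2 * a - 1 - 4 * b * K)) by (unfold f; ring).
      apply Rmult_le_pos; nra. }
    assert (Hfq : 0 <= f c).
    { replace (f c) with (2 * (c * c) * (a + b - 1 - K)) by (unfold f; ring).
      apply Rmult_le_pos; nra. }
    pose proof (quadratic_above_chord f _ _ (fun s => eq_refl) (2 * c * b) c r2
                  ltac:(lra)) as Hch.
    assert (0 <= (c - r2) * f (2 * c * b) + (r2 - 2 * c * b) * f c)
      by (apply Rplus_le_le_0_compat; apply Rmult_le_pos; lra).
    apply (Rmult_le_reg_l (c - 2 * c * b)); lra. }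
  set (g s := - s * s + (2 * c * a - 2 * r2 * K) * s + (2 * c * r2 * b - r2 * r2)).
  assert (Hg : 0 < g r1).
  { assert (Hgp : 0 < g (2 * c * a)).
    { replace (g (2 * c * a)) with (r2 * (c * (2 * b - 1 - 4 * a * K) + (c - r2)))
        by (unfold g; ring).
      apply Rmult_lt_0_compat; nra. }
    assert (Hgq : g c = f r2) by (unfold f, g; ring).
    pose proof (quadratic_above_chord g _ _ (fun s => eq_refl) (2 * c * a) c r1
                  ltac:(lra)) as Hch.
    assert (0 < (c - r1) * g (2 * c * a) + (r1 - 2 * c * a) * g c).
    { rewrite Hgq; apply Rplus_lt_le_0_compat;
        [apply Rmult_lt_0_compat | apply Rmult_le_pos]; lra. }
    apply (Rmult_lt_reg_l (c - 2 * c * a)); lra. }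
  unfold g in Hg; lra.
Qed.

Lemma PI3_lt_of_cos_lt_half (x : R) : 0 <= x <= PI -> cos x < 1 / 2 -> PI / 3 < x.
Proof.
  intros Hx Hc; rewrite <- cos_PI3 in Hc; pose proof PI_RGT_0.
  apply (cos_decreasing_0 x (PI / 3)); lra.
Qed.

Lemma cos_le_neg_half (x : R) : PI <= x <= 4 * PI / 3 -> cos x <= - (1 / 2).
Proof.
  intros Hx; pose proof PI_RGT_0.
  assert (E : cos x = - cos (x - PI)) by (rewrite cos_minus, cos_PI, sin_PI; ring).
  assert (cos (PI / 3) <= cos (x - PI)).
  { destruct (Req_dec (x - PI) (PI / 3)) as [e|ne]; [rewrite e; lra|].
    left; apply cos_decreasing_1; lra. }
  rewrite cos_PI3 in *; lra.
Qed.

(* The bound [5 PI / 6] enters only through [t1 + 2 t2, t2 + 2 t1 \in [PI, 4 PI / 3]],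
   which holds once both angles exceed [PI / 3]. *)
Lemma crossing_shorter (c r1 r2 t1 t2 : R) :
  0 < r1 < c -> 0 < r2 < c -> 0 <= t1 <= PI -> 0 <= t2 <= PI -> t1 + t2 <= 5 * PI / 6 ->
  2 * c * cos t1 <= r1 -> 2 * c * cos t2 <= r2 ->
  r1 * r1 + r2 * r2 + 2 * r1 * r2 * cos (t1 + t2) < 2 * c * (r1 * cos t1 + r2 * cos t2).
Proof.
  intros Hr1 Hr2 Ht1 Ht2 Ht12 Ha Hb; pose proof PI_RGT_0.
  assert (T1 : PI / 3 < t1) by (apply PI3_lt_of_cos_lt_half; nra).
  assert (T2 : PI / 3 < t2) by (apply PI3_lt_of_cos_lt_half; nra).
  assert (a0 : 0 < cos t1) by (apply cos_gt_0; lra).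
  assert (b0 : 0 < cos t2) by (apply cos_gt_0; lra).
  assert (sa0 : 0 < sin t1) by (apply sin_gt_0; lra).
  assert (sb0 : 0 < sin t2) by (apply sin_gt_0; lra).
  pose proof (sin2_cos2 t1) as ea; pose proof (sin2_cos2 t2) as eb; unfold Rsqr in ea, eb.
  pose proof (cos_le_neg_half (t1 + 2 * t2) ltac:(lra)) as C1.
  pose proof (cos_le_neg_half (t2 + 2 * t1) ltac:(lra)) as C2.
  rewrite cos_plus, cos_2a_cos, sin_2a in C1, C2.
  assert (Hsa : 1 - cos t1 <= sin t1) by nra.
  assert (Hsb : 1 - cos t2 <= sin t2) by nra.
  assert ((1 - cos t1) * (1 - cos t2) <= sin t1 * sin t2)
    by (apply Rmult_le_compat; nra).
  rewrite cos_plus.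
  apply crossing_quadratic_ineq; lra.
Qed.

Lemma quadrilateral_shortcut (u v w z : point) :
  w <> u -> z <> v -> d u w < d u v -> d v z < d u v ->
  angle u v w + angle v u z <= 5 * PI / 6 -> 0 <= orient u v w * orient u v z ->
  d w v < d u v \/ d u z < d u v \/ d w z < d u v.
Proof.
  intros Hw Hz Hr1 Hr2 Hang Hside.
  assert (Hv : v <> u) by (intros ->; rewrite d_self in Hr1; pose proof (d_nonneg u w); lra).
  assert (Hu : u <> v) by auto.
  pose proof (d_pos _ _ (not_eq_sym Hw)) as Hr1pos.
  pose proof (d_pos _ _ (not_eq_sym Hz)) as Hr2pos.
  pose proof (acos_bound (cos_angle u v w)) as Ht1.
  pose proof (acos_bound (cos_angle v u z)) as Ht2.
  fold (angle u v w) (angle v u z) in Ht1, Ht2.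
  destruct (Rlt_dec (d u w) (2 * d u v * cos (angle u v w))) as [H1|H1].
  { left; rewrite d_sym; apply d_lt_of_dist2_lt.
    rewrite (law_of_cosines u v w), <- (d_mul_self u v) by auto; nra. }
  destruct (Rlt_dec (d v z) (2 * d u v * cos (angle v u z))) as [H2|H2].
  { right; left; apply d_lt_of_dist2_lt.
    rewrite (law_of_cosines v u z), (d_sym v u), <- (d_mul_self u v) by auto; nra. }
  right; right; apply d_lt_of_dist2_lt.
  pose proof (crossing_shorter (d u v) (d u w) (d v z) (angle u v w) (angle v u z)
                ltac:(lra) ltac:(lra) Ht1 Ht2 Hang ltac:(lra) ltac:(lra)).
  rewrite (quadrilateral_cosines u v w z), <- (d_mul_self u v) by auto; nra.
Qed.

Lemma polar_direction (p q : point) : q <> p ->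
  exists b, fst q - fst p = d p q * cos b /\ snd q - snd p = d p q * sin b.
Proof.
  intros Hq.
  set (x := (fst p + 1, snd p)).
  assert (Hx : x <> p) by (destruct p; unfold x; simpl; intros [=]; lra).
  assert (dx : d p x = 1).
  { unfold d, x; cbn [fst snd].
    replace ((fst p - (fst p + 1)) ^ 2 + (snd p - snd p) ^ 2) with 1 by ring; apply sqrt_1. }
  pose proof (cos_angle_mul p x q Hx Hq) as C.
  pose proof (sin_angle_mul p x q Hx Hq) as S.
  rewrite dx in C, S; unfold dot, orient in C, S; subst x; cbn [fst snd] in C, S.
  destruct (Rle_dec 0 (snd q - snd p)) as [h|h].
  - exists (angle p (fst p + 1, snd p) q); rewrite Rabs_pos_eq in S by lra.
    split; lra.
  - exists (- angle p (fst p + 1, snd p) q); rewrite cos_neg, sin_neg.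
    rewrite Rabs_left in S by lra; split; lra.
Qed.

Lemma cone_point_angle (p q w : point) (b theta alpha : R) :
  q <> p -> fst q - fst p = d p q * cos b -> snd q - snd p = d p q * sin b ->
  in_cone p theta alpha w -> w <> p ->
  exists psi, theta - b - alpha / 2 <= psi <= theta - b + alpha / 2 /\
    cos_angle p q w = cos psi /\ orient p q w = d p q * d p w * sin psi.
Proof.
  intros Hq Hx Hy (t & phi & Ht & Hphi & ->) Hw.
  assert (Hdq := d_pos _ _ (not_eq_sym Hq)).
  assert (Hdw : d p (fst p + t * cos phi, snd p + t * sin phi) = t).
  { unfold d; cbn [fst snd].
    replace ((fst p - (fst p + t * cos phi)) ^ 2 + (snd p - (snd p + t * sin phi)) ^ 2)
      with (t * t * ((sin phi)² + (cos phi)²)) by (unfold Rsqr; ring).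
    rewrite sin2_cos2, Rmult_1_r; apply sqrt_square, Ht. }
  assert (Ht0 : t <> 0).
  { intros ->; apply Hw; destruct p; cbn; f_equal; ring. }
  exists (phi - b); split; [lra|].
  unfold cos_angle, dot, orient; rewrite Hdw; cbn [fst snd].
  rewrite cos_minus, sin_minus.
  replace (fst p + t * cos phi - fst p) with (t * cos phi) by ring.
  replace (snd p + t * sin phi - snd p) with (t * sin phi) by ring.
  rewrite Hx, Hy; split; [field; lra | ring].
Qed.

Lemma list_argmax {A : Type} (l : list A) (P : A -> Prop) (g : A -> R) :
  (exists x, In x l /\ P x) ->
  exists x, P x /\ forall y, In y l -> P y -> g y <= g x.
Proof.
  induction l as [|a l IH]; intros [x [Hx Px]]; [destruct Hx|].
  destruct (classic (exists y, In y l /\ P y)) as [Hl|Hl].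
  - destruct (IH Hl) as [m [Pm Hm]].
    destruct (classic (P a /\ g m < g a)) as [[Pa Ha]|Ha].
    + exists a; split; [exact Pa|]; intros y [<-|Hy] Py; [lra|].
      specialize (Hm y Hy Py); lra.
    + exists m; split; [exact Pm|]; intros y [<-|Hy] Py; [|auto].
      apply Rnot_lt_le; intro; auto.
  - assert (x = a) as -> by (destruct Hx as [->|Hx]; [reflexivity | exfalso; eauto]).
    exists a; split; [exact Px|]; intros y [<-|Hy] Py; [lra | exfalso; eauto].
Qed.

Lemma sin_nonpos (x : R) : - PI <= x <= 0 -> sin x <= 0.
Proof.
  intros Hx; rewrite <- (Ropp_involutive x), sin_neg.
  pose proof (sin_ge_0 (- x)); lra.
Qed.

Section FlankingPair.

Variables (V : list point) (S : point -> Prop) (p q : point) (alpha b : R).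
Hypotheses (S_in_V : forall w, S w -> In w V) (S_not_apex : forall w, S w -> w <> p).
Hypotheses (q_not_p : q <> p) (alpha_le_PI : alpha <= PI) (S_no_gap : ~ has_gap S p alpha).
Hypotheses (b_cos : fst q - fst p = d p q * cos b) (b_sin : snd q - snd p = d p q * sin b).

Lemma cone_meets_S (theta : R) :
  exists w psi, S w /\ theta - b - alpha / 2 <= psi <= theta - b + alpha / 2 /\
    cos_angle p q w = cos psi /\ orient p q w = d p q * d p w * sin psi.
Proof.
  assert (exists w, S w /\ in_cone p theta alpha w) as (w & Sw & Cw).
  { apply NNPP; intro H; apply S_no_gap; exists theta; intros w Sw Cw; eauto. }
  destruct (cone_point_angle p q w b theta alpha) as (psi & Hpsi & Hcos & Hor); auto.
  exists w, psi; auto.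
Qed.

Lemma orient_nonneg_of_angle (w : point) (psi : R) :
  orient p q w = d p q * d p w * sin psi -> 0 <= psi <= PI -> 0 <= orient p q w.
Proof.
  intros -> Hpsi; apply Rmult_le_pos; [apply Rmult_le_pos; apply d_nonneg|].
  apply sin_ge_0; lra.
Qed.

Lemma orient_nonpos_of_angle (w : point) (psi : R) :
  orient p q w = d p q * d p w * sin psi -> - PI <= psi <= 0 -> orient p q w <= 0.
Proof.
  intros -> Hpsi; pose proof (sin_nonpos psi Hpsi).
  pose proof (d_nonneg p q); pose proof (d_nonneg p w).
  assert (0 <= d p q * d p w) by (apply Rmult_le_pos; lra); nra.
Qed.

Lemma flanking_pair_polar :
  exists w1 w2, S w1 /\ S w2 /\ 0 <= orient p q w1 /\ orient p q w2 <= 0 /\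
    angle p q w1 + angle p q w2 <= alpha.
Proof.
  pose proof PI_RGT_0.
  destruct (list_argmax V (fun w => S w /\ 0 <= orient p q w) (cos_angle p q))
    as (w1 & [S1 O1] & M1).
  { destruct (cone_meets_S (b + PI / 2)) as (w & psi & Sw & Hpsi & _ & Hor).
    exists w; split; [auto|]; split; [exact Sw|].
    apply (orient_nonneg_of_angle w psi Hor); lra. }
  destruct (list_argmax V (fun w => S w /\ orient p q w <= 0) (cos_angle p q))
    as (w2 & [S2 O2] & M2).
  { destruct (cone_meets_S (b - PI / 2)) as (w & psi & Sw & Hpsi & _ & Hor).
    exists w; split; [auto|]; split; [exact Sw|].
    apply (orient_nonpos_of_angle w psi Hor); lra. }
  exists w1, w2; do 4 (split; [assumption|]).
  pose proof (acos_bound (cos_angle p q w1)) as B1.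
  pose proof (acos_bound (cos_angle p q w2)) as B2.
  pose proof (cos_angle_acos p q w1 q_not_p (S_not_apex w1 S1)) as C1.
  pose proof (cos_angle_acos p q w2 q_not_p (S_not_apex w2 S2)) as C2.
  unfold angle in *.
  set (t1 := acos (cos_angle p q w1)) in *; set (t2 := acos (cos_angle p q w2)) in *.
  (* The cone aimed midway into the angular gap between [w1] and [w2] meets [S]
     at a point closer in angle to [q] than the extremal one on its side. *)
  apply Rnot_lt_le; intro Hwide.
  destruct (cone_meets_S (b + (t1 - t2) / 2)) as (w & psi & Sw & Hpsi & Hcos & Hor).
  destruct (Rle_dec 0 psi) as [Hp|Hn].
  - pose proof (M1 w (S_in_V w Sw) (conj Sw (orient_nonneg_of_angle w psi Hor ltac:(lra)))).
    assert (cos t1 < cos psi) by (apply cos_decreasing_1; lra).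
    lra.
  - pose proof (M2 w (S_in_V w Sw) (conj Sw (orient_nonpos_of_angle w psi Hor ltac:(lra)))).
    assert (cos t2 < cos (- psi)) by (apply cos_decreasing_1; lra).
    rewrite cos_neg in *; lra.
Qed.

End FlankingPair.

Lemma no_gap_flanking_pair (V : list point) (S : point -> Prop) (p q : point) (alpha : R) :
  (forall w, S w -> In w V) -> (forall w, S w -> w <> p) ->
  q <> p -> alpha <= PI -> ~ has_gap S p alpha ->
  exists w1 w2, S w1 /\ S w2 /\ 0 <= orient p q w1 /\ orient p q w2 <= 0 /\
    angle p q w1 + angle p q w2 <= alpha.
Proof.
  intros HV Hp Hq Ha Hng.
  destruct (polar_direction p q Hq) as (b & Hb1 & Hb2).
  exact (flanking_pair_polar V S p q alpha b HV Hp Hq Ha Hng Hb1 Hb2).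
Qed.

Lemma cbtc_index_exists (V : list point) (rs : list R) (alpha : R) (u : point) :
  (0 < length rs)%nat -> exists i, cbtc_index V rs alpha u i.
Proof.
  intros Hk.
  set (P j := (j < length rs)%nat /\ ~ has_gap (S_lvl V rs j u) u alpha).
  destruct (classic (exists j, P j)) as [HP|HP].
  - destruct (dec_inh_nat_subset_has_unique_least_element P (fun j => classic (P j)) HP)
      as (i & [[Hi Hng] Hleast] & _).
    exists i; split; [exact Hi|]; left; split; [exact Hng|].
    intros j Hj; apply NNPP; intro Hg.
    assert (Pj : P j) by (split; [lia | exact Hg]).
    specialize (Hleast j Pj); lia.
  - exists (pred (length rs)); split; [lia|]; right; split; [reflexivity|].
    intros j Hj; apply NNPP; intro Hg; apply HP; exists j; split; assumption.
Qed.

Lemma cbtc_index_nonneighbor (V : list point) (rs : list R) (Rmax alpha : R)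
    (u v : point) (i : nat) :
  levels_ok rs Rmax -> In v V -> v <> u -> d u v <= Rmax ->
  cbtc_index V rs alpha u i -> ~ S_lvl V rs i u v ->
  ~ has_gap (S_lvl V rs i u) u alpha /\ nth i rs 0 < d u v.
Proof.
  intros (_ & _ & _ & Hlast) Hv Hvu Hd (Hi & [[Hng _] | [-> _]]) HnS.
  - split; [exact Hng|]; apply Rnot_le_lt; intro; apply HnS; repeat split; auto.
  - exfalso; apply HnS; repeat split; auto; rewrite Hlast; exact Hd.
Qed.

Lemma cbtc_shortcut (V : list point) (rs : list R) (alpha : R) (u v w z : point)
    (iu iv : nat) :
  cbtc_index V rs alpha u iu -> cbtc_index V rs alpha v iv ->
  S_lvl V rs iu u w -> S_lvl V rs iv v z ->
  nth iu rs 0 < d u v -> nth iv rs 0 < d u v -> In u V -> In v V ->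
  angle u v w + angle v u z <= 5 * PI / 6 -> 0 <= orient u v w * orient u v z ->
  exists u' v' : point,
    In u' V /\ In v' V /\
    d u' v' < d u v /\
    (u' = u \/ E_alpha V rs alpha u u') /\
    (v' = v \/ E_alpha V rs alpha v v').
Proof.
  intros Iu Iv Sw Sz Hu Hv InU InV Hang Hside.
  assert (Ew : E_alpha V rs alpha u w) by (left; exists iu; auto).
  assert (Ez : E_alpha V rs alpha v z) by (left; exists iv; auto).
  destruct Sw as (InW & Hw & Hdw), Sz as (InZ & Hz & Hdz).
  destruct (quadrilateral_shortcut u v w z) as [H | [H | H]]; try lra; auto.
  - exists w, v; auto 6.
  - exists u, z; auto 6.
  - exists w, z; auto 6.
Qed.

Theorem lemma1 (V : list point) (rs : list R) (Rmax alpha : R) (u v : point) :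
  NoDup V ->
  0 < Rmax ->
  levels_ok rs Rmax ->
  0 < alpha -> alpha <= 5 * PI / 6 ->
  E_R V Rmax u v ->
  E_alpha V rs alpha u v \/
  exists u' v' : point,
    In u' V /\ In v' V /\
    d u' v' < d u v /\
    (u' = u \/ E_alpha V rs alpha u u') /\
    (v' = v \/ E_alpha V rs alpha v v').
Proof.
  intros _ _ Hlev _ Halpha (InU & InV & Huv & Hd).
  destruct (classic (E_alpha V rs alpha u v)) as [HE|HE]; [left; exact HE | right].
  pose proof PI_RGT_0.
  destruct (cbtc_index_exists V rs alpha u (proj1 Hlev)) as [iu Iu].
  destruct (cbtc_index_exists V rs alpha v (proj1 Hlev)) as [iv Iv].
  destruct (cbtc_index_nonneighbor V rs Rmax alpha u v iu) as [NGu Lu]; auto.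
  { intro; apply HE; left; exists iu; auto. }
  destruct (cbtc_index_nonneighbor V rs Rmax alpha v u iv) as [NGv Lv]; auto.
  { rewrite d_sym; exact Hd. }
  { intro; apply HE; right; exists iv; auto. }
  rewrite d_sym in Lv.
  destruct (no_gap_flanking_pair V (S_lvl V rs iu u) u v alpha)
    as (w1 & w2 & Sw1 & Sw2 & Ow1 & Ow2 & Aw);
    [intros w Sw; apply Sw | intros w Sw; apply Sw | auto | lra | exact NGu |].
  destruct (no_gap_flanking_pair V (S_lvl V rs iv v) v u alpha)
    as (z1 & z2 & Sz1 & Sz2 & Oz1 & Oz2 & Az);
    [intros w Sw; apply Sw | intros w Sw; apply Sw | auto | lra | exact NGv |].
  rewrite (orient_swap u v z1) in Oz1; rewrite (orient_swap u v z2) in Oz2.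
  (* The four angles add up to at most [2 alpha]. *)
  destruct (Rle_dec (angle u v w1 + angle v u z2) alpha) as [Ha|Ha].
  - apply (cbtc_shortcut V rs alpha u v w1 z2 iu iv); auto; [lra | nra].
  - apply (cbtc_shortcut V rs alpha u v w2 z1 iu iv); auto; [lra | nra].
Qed.
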